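(* For every integer $n\ge 4$, in the Maker–Breaker transversal game on an $n\times n$ grid, the first player (Maker) has a winning strategy; moreover Maker can win with a strategy whose first move is the top-left cell $(1,1)$.
   Context: A transversal of an $n\times n$ grid is a set of $n$ cells no two of which lie in the same row or the same column. Cell $(a,b)$ denotes the cell in row $a$ (counted from the top) and column $b$ (counted from the left). In the Maker–Breaker transversal game on an $n\times n$ grid, two players alternately claim unoccupied cells, Maker moving first. Maker wins if at some point he has claimed all $n$ cells of some transversal; otherwise (in particular if the grid is filled without this happening) Breaker wins. Breaker claiming a transversal has no effect. *)

From mathcomp Require Import all_boot.
Set Implicit Arguments. Unset Strict Implicit. Unset Printing Implicit Defensive.

(* A cell (a,b) of the n x n grid: row a, column b, indexed from 0
   (so the paper's cell (1,1) is (0,0)). *)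
Definition cell (n : nat) : finType := ('I_n * 'I_n)%type.

Definition is_transversal (n : nat) (T : {set cell n}) : Prop :=
  #|T| = n /\
  (forall x y, x \in T -> y \in T -> x != y -> x.1 != y.1 /\ x.2 != y.2).

Definition maker_has_transversal (n : nat) (M : {set cell n}) : Prop :=
  exists T : {set cell n}, is_transversal T /\ T \subset M.

(* maker_wins M B : in the position where Maker has claimed M, Breaker has
   claimed B, and it is Maker's turn, Maker has a winning strategy.
   Maker must pick a free cell c; after that either Maker owns a transversal
   (win), or the game continues: there must be a free cell for Breaker
   (otherwise the grid is full and Breaker wins), and for every answer d of
   Breaker Maker still has a winning strategy.  Since the game is finite,
   this inductive characterisation is exactly the existence of a winning
   strategy for Maker. *)
Inductive maker_wins (n : nat) : {set cell n} -> {set cell n} -> Prop :=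
| MakerWins (M B : {set cell n}) (c : cell n) :
    c \notin M :|: B ->
    (maker_has_transversal (c |: M) \/
     ((exists d : cell n, d \notin (c |: M) :|: B) /\
      (forall d : cell n, d \notin (c |: M) :|: B ->
         maker_wins (c |: M) (d |: B)))) ->
    maker_wins M B.

(* Maker wins from the position (M, B) in which Maker has just moved and it
   is Breaker's turn (same continuation as in the constructor above). *)
Definition maker_wins_after (n : nat) (M B : {set cell n}) : Prop :=
  maker_has_transversal M \/
  ((exists d : cell n, d \notin M :|: B) /\
   (forall d : cell n, d \notin M :|: B -> maker_wins M (d |: B))).

From mathcomp Require Import all_boot zify.

(* Maker wins with a pairing strategy.  Call an involution p of the cells
   covering if every rectangle X x Y with |X| + |Y| > n contains a pair
   {c, p c} with c <> p c.  If Maker answers each Breaker move on a paired cell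
   with its partner, and otherwise claims a cell of a pair he does not touch
   yet, he ends up owning a cell of every pair; so his cells meet every such
   rectangle, and by the Frobenius-Koenig theorem (a form of Hall's marriage
   theorem) they contain a transversal.  Covering pairings exist for
   n = 4, ..., 7 (checked by computation), and the block-diagonal sum of
   covering pairings of sizes a and b is covering for a + b. *)

Set Implicit Arguments. Unset Strict Implicit. Unset Printing Implicit Defensive.

Section Hall.
Variables (T1 T2 : finType).
Implicit Types (R : T1 -> T2 -> bool) (A S U : {set T1}) (N : {set T2}).

Definition neighbours R S : {set T2} := [set y | [exists x in S, R x y]].

Definition hall_condition R A := forall S, S \subset A -> #|S| <= #|neighbours R S|.

Definition matching R A (f : T1 -> T2) :=
  {in A &, injective f} /\ {in A, forall x, R x (f x)}.

Definition avoiding R N x y := R x y && (y \notin N).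

Lemma neighboursU R U S : neighbours R (U :|: S) = neighbours R U :|: neighbours R S.
Proof.
apply/setP => y; rewrite !inE; apply/existsP/orP.
- by case=> x /andP [/setUP [xU|xS] Rxy]; [left | right]; apply/existsP; exists x;
    rewrite ?xU ?xS.
- by case=> /existsP [x /andP [xUS Rxy]]; exists x; rewrite inE xUS ?orbT Rxy.
Qed.

Lemma neighbours_avoiding R N U : neighbours R U \subset N :|: neighbours (avoiding R N) U.
Proof.
apply/subsetP => y; rewrite !inE => /existsP [x /andP [xU Rxy]].
have [//|yN] := boolP (y \in N).
by apply/existsP; exists x; rewrite xU /avoiding Rxy yN.
Qed.

Lemma matching0 R f : matching R set0 f.
Proof. by split=> x; rewrite inE. Qed.

Lemma matching_glue R A S N f g :
  matching R S f -> {in S, forall x, f x \in N} ->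
  matching (avoiding R N) (A :\: S) g ->
  matching R A (fun x => if x \in S then f x else g x).
Proof.
move=> [f_inj f_R] fN [g_inj g_R]; split=> [x y xA yA | x xA].
- have g_out z : z \in A -> z \notin S -> g z \notin N.
    by move=> zA zS; have /g_R/andP [] : z \in A :\: S by rewrite inE zS.
  case xS: (x \in S); case yS: (y \in S).
  + exact: f_inj.
  + by move=> fgxy; have := g_out y yA (negbT yS); rewrite -fgxy fN.
  + by move=> gfxy; have := g_out x xA (negbT xS); rewrite gfxy fN.
  + by apply: g_inj; rewrite inE ?xS ?yS.
- case xS: (x \in S); first exact: f_R.
  by have /g_R/andP [] : x \in A :\: S by rewrite inE xS.
Qed.

Lemma cardsU_disjoint U S : [disjoint U & S] -> #|U :|: S| = #|U| + #|S|.
Proof. by move=> dUS; apply/eqP; rewrite (leq_card_setU U S).2. Qed.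

Section HallStep.
Variable k : nat.
Hypothesis IH :
  forall R A, #|A| <= k -> hall_condition R A -> exists f, matching R A f.

Lemma hall_tight R A S : #|A| <= k.+1 -> hall_condition R A ->
  S \proper A -> S != set0 -> #|neighbours R S| <= #|S| ->
  exists f, matching R A f.
Proof.
move=> cardA hallA ltSA S0 tightS; have sSA := proper_sub ltSA.
have [f [f_inj f_R]] : exists f, matching R S f.
  apply: IH => [|U sUS]; first by have := proper_card ltSA; lia.
  by apply: hallA; apply: subset_trans sSA.
have [g gAS] : exists g, matching (avoiding R (neighbours R S)) (A :\: S) g.
  apply: IH => [|U sUAS].
    by rewrite cardsDS //; have := card_gt0 S; rewrite S0; lia.
  have dUS : [disjoint U & S].
    by rewrite disjoints_subset (subset_trans sUAS) // setDE subsetIr.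
  have := hallA (U :|: S); rewrite subUset sSA (subset_trans sUAS) ?subsetDl //.
  rewrite cardsU_disjoint // neighboursU => /(_ isT) hallUS.
  set NS := neighbours R S in tightS hallUS *; set NU := neighbours (avoiding R NS) U.
  have : #|neighbours R U :|: NS| <= #|NS :|: NU|.
    by apply: subset_leq_card; rewrite subUset neighbours_avoiding subsetUl.
  have := (leq_card_setU NS NU).1; lia.
exists (fun x => if x \in S then f x else g x).
apply: matching_glue gAS => [|x xS]; first by split.
by rewrite inE; apply/existsP; exists x; rewrite xS f_R.
Qed.

Lemma hall_slack R A x : #|A| <= k.+1 -> hall_condition R A -> x \in A ->
  (forall S, S \proper A -> S != set0 -> #|S| < #|neighbours R S|) ->
  exists f, matching R A f.
Proof.
move=> cardA hallA xA slackA.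
have [y Rxy] : exists y, R x y.
  have /card_gt0P [y] : 0 < #|neighbours R [set x]|.
    by have := hallA [set x]; rewrite sub1set xA cards1; apply.
  by rewrite inE => /existsP [_ /andP [/set1P -> Rxy]]; exists y.
have [g gAx] : exists g, matching (avoiding R [set y]) (A :\ x) g.
  apply: IH => [|U sUAx]; first by rewrite cardsDS ?sub1set // cards1; lia.
  have [->|U0] := eqVneq U set0; first by rewrite cards0.
  have := slackA U (sub_proper_trans sUAx (properD1 xA)) U0.
  have := subset_leq_card (neighbours_avoiding R [set y] U).
  have := (leq_card_setU [set y] (neighbours (avoiding R [set y]) U)).1.
  rewrite cards1; lia.
exists (fun z => if z \in [set x] then y else g z).
apply: matching_glue gAx => [|z _]; last exact: set11.
by split=> [z z' /set1P -> /set1P -> | z /set1P ->].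
Qed.

End HallStep.

Theorem hall_marriage (y0 : T2) R A : hall_condition R A -> exists f, matching R A f.
Proof.
move: {2}#|A| (leqnn #|A|) => k; elim: k R A => [|k IH] R A cardA hallA.
  by move: cardA; rewrite leqn0 => /eqP/cards0_eq ->; exists (fun=> y0); apply: matching0.
have [|] := boolP [exists S : {set T1},
  [&& S \proper A, S != set0 & #|neighbours R S| <= #|S|]].
  by case/existsP => S /and3P [ltSA S0 tightS]; apply: (hall_tight IH cardA hallA ltSA S0).
move/existsPn => slackA; have [A0|[x xA]] := set_0Vmem A.
  by rewrite A0; exists (fun=> y0); apply: matching0.
apply: (hall_slack IH cardA hallA xA) => S ltSA S0.
by move: (slackA S); rewrite ltSA S0 /= -ltnNge.
Qed.

End Hall.

Lemma transversal_graph n (f : 'I_n -> 'I_n) :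
  injective f -> is_transversal [set (i, f i) | i : 'I_n].
Proof.
move=> f_inj; split; first by rewrite card_imset ?card_ord // => i j [].
move=> _ _ /imsetP [i _ ->] /imsetP [j _ ->] neq_ij /=.
have {} neq_ij : i != j by apply: contraNneq neq_ij => ->.
by rewrite neq_ij (inj_eq f_inj).
Qed.

Theorem frobenius_konig n (M : {set cell n}) :
  (forall X Y : {set 'I_n}, n < #|X| + #|Y| -> exists2 c, c \in M & c \in setX X Y) ->
  maker_has_transversal M.
Proof.
case: n M => [|n] M hitM.
  by exists set0; split; [split=> [|[[]]]; rewrite ?cards0 | apply: sub0set].
pose R i j := (i, j) \in M.
have [f [f_inj f_R]] : exists f, matching R [set: 'I_n.+1] f.
  apply: (hall_marriage ord0) => S _; rewrite leqNgt; apply/negP => ltNS.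
  have [[i j] ijM] : exists2 c, c \in M & c \in setX S (~: neighbours R S).
    apply: hitM; have := cardsC (neighbours R S); rewrite card_ord => hC.
    by rewrite -[X in X < _]hC ltn_add2r.
  rewrite !inE => /andP [iS /existsPn /(_ i)].
  by rewrite iS /R ijM.
exists [set (i, f i) | i : 'I_n.+1]; split.
  by apply: transversal_graph => i j; apply: f_inj; rewrite inE.
by apply/subsetP => _ /imsetP [i _ ->]; apply: f_R; rewrite inE.
Qed.

Definition covering_pairing n (p : cell n -> cell n) :=
  involutive p /\
  forall X Y : {set 'I_n}, n < #|X| + #|Y| ->
    exists c, [/\ p c != c, c \in setX X Y & p c \in setX X Y].

Lemma ltn_cardsCU1 (T : finType) (x : T) (S : {set T}) :
  x \notin S -> #|~: (x |: S)| < #|~: S|.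
Proof. by move=> xS; rewrite proper_card // properC properUr // sub1set. Qed.

Section PairingStrategy.
Variables (n : nat) (p : cell n -> cell n).
Hypothesis p_cover : covering_pairing p.
Implicit Types (M B : {set cell n}) (c d e : cell n).

Definition pairing_invariant M B := forall d, d \in B -> p d != d -> p d \in M.

Lemma transversal_of_pairs M :
  (forall c, p c != c -> (c \in M) || (p c \in M)) -> maker_has_transversal M.
Proof.
move=> pairsM; apply: frobenius_konig => X Y ltnXY.
have [c [pc_c cXY pcXY]] := p_cover.2 X Y ltnXY.
by case/orP: (pairsM c pc_c) => ?; [exists c | exists (p c)].
Qed.

Lemma pairing_invariantU1 M B d e : pairing_invariant M B ->
  (p d != d -> p d \in e |: M) -> pairing_invariant (e |: M) (d |: B).
Proof.
move=> invMB inv_d x /setU1P [-> //|xB] px_x.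
by rewrite inE invMB ?orbT.
Qed.

Lemma partner_notin_breaker M B c : pairing_invariant M B ->
  p c != c -> c \notin M -> p c \notin B.
Proof.
move=> invMB pc_c; apply: contra => /invMB; rewrite p_cover.1 eq_sym; exact.
Qed.

Lemma pairing_reply M B c d : pairing_invariant M B ->
  p c != c -> c \notin M -> p c \notin M -> d \notin M :|: B ->
  exists2 e, e \notin M :|: (d |: B) & pairing_invariant (e |: M) (d |: B).
Proof.
move=> invMB pc_c cM pcM; rewrite inE negb_or => /andP [dM dB].
have pK := p_cover.1.
have [/andP [pd_d pd_free]|pd_taken] := boolP ((p d != d) && (p d \notin M :|: (d |: B))).
  by exists (p d) => //; apply: pairing_invariantU1 => // _; apply: setU11.
have pdM : p d != d -> p d \in M.
  move=> pd_d; move: pd_taken; rewrite pd_d !inE negbK (negbTE pd_d) /=.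
  by case/orP=> // pdB; have := partner_notin_breaker invMB pd_d dM; rewrite pdB.
have cB : c \notin B by rewrite -[c]pK (partner_notin_breaker invMB) ?pK // eq_sym.
have pcB := partner_notin_breaker invMB pc_c cM.
exists c; last by apply: pairing_invariantU1 => // /pdM pd_M; rewrite inE pd_M orbT.
rewrite !inE (negbTE cM) (negbTE cB) orbF /=; apply: contra pd_taken => /eqP <-.
by apply/andP; split=> //; rewrite !inE (negbTE pcM) (negbTE pcB) (negbTE pc_c).
Qed.

Lemma pairing_strategy_wins M B : pairing_invariant M B -> maker_wins_after M B.
Proof.
move: {2}_.+1 (ltnSn #|~: (M :|: B)|) => k; elim: k M B => // k IH M B free_lt invMB.
have [/existsP [c /and3P [pc_c cM pcM]]|] :=
  boolP [exists c, [&& p c != c, c \notin M & p c \notin M]]; last first.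
  move/existsPn => pairsM; left; apply: transversal_of_pairs => c pc_c.
  by move: (pairsM c); rewrite pc_c /= negb_and !negbK.
have cB : c \notin B by apply: contra pcM => cB; apply: invMB.
right; split=> [|d dMB]; first by exists c; rewrite inE negb_or cM.
have [e eMdB inv_e] := pairing_reply invMB pc_c cM pcM dMB.
apply: (MakerWins eMdB); apply: IH inv_e.
have -> : (e |: M) :|: (d |: B) = e |: (d |: (M :|: B)) by rewrite -setUA [M :|: _]setUCA.
have e_free : e \notin d |: (M :|: B) by rewrite setUCA.
have := ltn_cardsCU1 dMB; have := ltn_cardsCU1 e_free; lia.
Qed.

End PairingStrategy.

Lemma split_lshift a b (i : 'I_a) : split (lshift b i) = inl i.
Proof. exact: (unsplitK (inl _ i)). Qed.

Lemma split_rshift a b (j : 'I_b) : split (@rshift a b j) = inr j.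
Proof. exact: (unsplitK (inr _ j)). Qed.

Lemma card_split_ord a b (X : {set 'I_(a + b)}) :
  #|X| = #|lshift b @^-1: X| + #|@rshift a b @^-1: X|.
Proof.
by rewrite -!sum1_card big_split_ord; congr (_ + _); apply: eq_bigl => i; rewrite inE.
Qed.

Section EmbedCells.
Variables (a m : nat) (f : 'I_a -> 'I_m).

Definition map_cell (c : cell a) : cell m := (f c.1, f c.2).

Lemma map_cell_inj : injective f -> injective map_cell.
Proof. by move=> f_inj [i j] [i' j'] [/f_inj -> /f_inj ->]. Qed.

Lemma map_cell_setX c (X Y : {set 'I_m}) :
  (map_cell c \in setX X Y) = (c \in setX (f @^-1: X) (f @^-1: Y)).
Proof. by case: c => i j; rewrite !inE. Qed.

Lemma covering_pairing_embed (pa : cell a -> cell a) (q : cell m -> cell m)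
    (X Y : {set 'I_m}) :
  covering_pairing pa -> injective f -> {morph map_cell : c / pa c >-> q c} ->
  a < #|f @^-1: X| + #|f @^-1: Y| ->
  exists c, [/\ q c != c, c \in setX X Y & q c \in setX X Y].
Proof.
move=> [_ pa_cover] f_inj q_pa /pa_cover [c [pc_c cXY pcXY]].
exists (map_cell c); rewrite -q_pa !map_cell_setX cXY pcXY (inj_eq (map_cell_inj f_inj)).
by split.
Qed.

End EmbedCells.

Section BlockPairing.
Variables (a b : nat) (pa : cell a -> cell a) (pb : cell b -> cell b).

Definition block_pairing (c : cell (a + b)) : cell (a + b) :=
  match split c.1, split c.2 with
  | inl i, inl j => map_cell (lshift b) (pa (i, j))
  | inr i, inr j => map_cell (@rshift a b) (pb (i, j))
  | _, _ => c
  end.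

Lemma block_pairingL : {morph map_cell (lshift b) : c / pa c >-> block_pairing c}.
Proof. by case=> i j; rewrite /block_pairing /= !split_lshift. Qed.

Lemma block_pairingR : {morph map_cell (@rshift a b) : c / pb c >-> block_pairing c}.
Proof. by case=> i j; rewrite /block_pairing /= !split_rshift. Qed.

Lemma block_pairing_involutive :
  involutive pa -> involutive pb -> involutive block_pairing.
Proof.
move=> paK pbK [x y]; rewrite -(splitK x) -(splitK y).
case: (split x) => i; case: (split y) => j.
- by rewrite -[(_, _)]/(map_cell (lshift b) (i, j)) -!block_pairingL paK.
- by rewrite /block_pairing /= !(split_lshift, split_rshift).
- by rewrite /block_pairing /= !(split_lshift, split_rshift).
- by rewrite -[(_, _)]/(map_cell (@rshift a b) (i, j)) -!block_pairingR pbK.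
Qed.

Lemma covering_pairing_block :
  covering_pairing pa -> covering_pairing pb -> covering_pairing block_pairing.
Proof.
move=> pa_cover pb_cover; split.
  exact: block_pairing_involutive pa_cover.1 pb_cover.1.
move=> X Y; rewrite (card_split_ord X) (card_split_ord Y).
have [ltaXY _|leXYa ltXY] := ltnP a (#|lshift b @^-1: X| + #|lshift b @^-1: Y|).
  exact: covering_pairing_embed pa_cover (@lshift_inj a b) block_pairingL ltaXY.
apply: covering_pairing_embed pb_cover (@rshift_inj a b) block_pairingR _; lia.
Qed.

End BlockPairing.

Fixpoint all_bitseq (k : nat) (P : bitseq -> bool) : bool :=
  if k is k'.+1 then
    all_bitseq k' (fun s => P (true :: s)) && all_bitseq k' (fun s => P (false :: s))
  else P [::].

Lemma all_bitseqP k P : all_bitseq k P -> forall s, size s = k -> P s.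
Proof.
elim: k P => [|k IH] P /=; first by move=> P0 [].
by case/andP=> Pt Pf [//|[] s] /= [size_s]; [apply: (IH _ Pt) | apply: (IH _ Pf)].
Qed.

Section NatPairing.
Variables (s : nat) (f : nat * nat -> nat * nat).

Definition nat_pairing_involutive :=
  all (fun i => all (fun j => let c := f (i, j) in
    [&& c.1 < s, c.2 < s & f c == (i, j)]) (iota 0 s)) (iota 0 s).

Definition nat_pairing_covers :=
  all_bitseq s (fun X => all_bitseq s (fun Y => (s < count id X + count id Y) ==>
    has (fun i => has (fun j => let c := f (i, j) in
      [&& c != (i, j), nth false X i, nth false Y j, nth false X c.1 & nth false Y c.2])
    (iota 0 s)) (iota 0 s))).

End NatPairing.

Definition indicator s (X : {set 'I_s}) : bitseq := [seq i \in X | i <- enum 'I_s].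

Lemma count_indicator s (X : {set 'I_s}) : count id (indicator X) = #|X|.
Proof. by rewrite count_map cardE size_filter enumT. Qed.

Lemma nth_indicator s (X : {set 'I_s.+1}) i :
  i < s.+1 -> nth false (indicator X) i = (inord i \in X).
Proof.
move=> lt_is; rewrite (nth_map ord0) ?size_enum_ord //.
by congr (_ \in X); apply: val_inj; rewrite /= nth_enum_ord // inordK.
Qed.

Lemma size_indicator s (X : {set 'I_s}) : size (indicator X) = s.
Proof. by rewrite size_map size_enum_ord. Qed.

Definition ord_pairing s (f : nat * nat -> nat * nat) (c : cell s.+1) : cell s.+1 :=
  let q := f (nat_of_ord c.1, nat_of_ord c.2) in (inord q.1, inord q.2).

Lemma covering_pairing_of_nat s f :
  nat_pairing_involutive s.+1 f -> nat_pairing_covers s.+1 f ->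
  covering_pairing (@ord_pairing s f).
Proof.
move=> f_inv f_cover.
have f_invP i j : i < s.+1 -> j < s.+1 ->
    [&& (f (i, j)).1 < s.+1, (f (i, j)).2 < s.+1 & f (f (i, j)) == (i, j)].
  move=> lt_i lt_j; move/allP/(_ i): f_inv; rewrite mem_iota lt_i => /(_ isT)/allP.
  by apply; rewrite mem_iota.
split=> [[i j] | X Y ltXY].
  have /and3P [q1 q2 /eqP fK] := f_invP i j (ltn_ord i) (ltn_ord j).
  by rewrite /ord_pairing /= !inordK // -surjective_pairing fK /= !inord_val.
move: f_cover => /all_bitseqP/(_ _ (size_indicator X))/all_bitseqP/(_ _ (size_indicator Y)).
rewrite !count_indicator ltXY => /hasP [i]; rewrite mem_iota => /andP [_ lt_i].
move=> /hasP [j]; rewrite mem_iota => /andP [_ lt_j].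
have /and3P [q1 q2 _] := f_invP i j lt_i lt_j.
move=> /=; rewrite !nth_indicator // => /and5P [fij_ij iX jY qX qY].
exists (inord i, inord j); rewrite /ord_pairing /= !inordK // !inE iX jY qX qY; split=> //.
apply: contra fij_ij => /eqP [e1 e2]; apply/eqP.
by rewrite [f _]surjective_pairing -(inordK q1) -(inordK q2) e1 e2 !inordK.
Qed.

Fixpoint pair_lookup (t : seq ((nat * nat) * (nat * nat))) (c : nat * nat) : nat * nat :=
  if t is (x, y) :: t' then
    if x == c then y else if y == c then x else pair_lookup t' c
  else c.

(* Each table lists the pairs of a covering pairing as ((row, column), (row,
   column)) with 0-based indices; unlisted cells are unpaired. *)
Definition pairing_table4 : seq ((nat * nat) * (nat * nat)) :=
  [:: ((0,0),(0,1)); ((1,1),(1,2)); ((2,2),(2,3)); ((3,3),(3,0));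
      ((1,0),(2,0)); ((2,1),(3,1)); ((3,2),(0,2)); ((0,3),(1,3))].
Definition pairing_table5 : seq ((nat * nat) * (nat * nat)) :=
  [:: ((3,0),(4,0)); ((3,2),(3,1)); ((2,4),(2,0)); ((1,0),(0,0));
      ((0,3),(3,3)); ((1,2),(1,1)); ((1,3),(2,3)); ((0,2),(0,1));
      ((2,2),(4,2)); ((4,4),(4,3)); ((2,1),(4,1)); ((1,4),(3,4))].
Definition pairing_table6 : seq ((nat * nat) * (nat * nat)) :=
  [:: ((2,1),(4,4)); ((2,0),(2,2)); ((4,2),(5,2)); ((0,2),(3,2));
      ((5,3),(3,0)); ((1,4),(4,3)); ((5,0),(1,0)); ((0,3),(4,5));
      ((1,1),(3,1)); ((0,4),(0,0)); ((2,3),(1,3)); ((3,4),(2,4));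
      ((0,1),(5,1)); ((0,5),(2,5)); ((5,4),(5,5)); ((1,5),(1,2));
      ((4,0),(4,1)); ((3,5),(3,3))].
Definition pairing_table7 : seq ((nat * nat) * (nat * nat)) :=
  [:: ((2,3),(2,0)); ((6,1),(6,4)); ((2,4),(5,4)); ((6,5),(5,5));
      ((0,5),(2,5)); ((4,6),(5,1)); ((2,2),(6,0)); ((5,3),(5,2));
      ((5,0),(3,4)); ((4,3),(1,2)); ((4,4),(0,4)); ((5,6),(1,6));
      ((2,1),(0,1)); ((0,3),(0,2)); ((1,5),(1,4)); ((3,2),(6,2));
      ((2,6),(6,6)); ((3,6),(3,1)); ((6,3),(1,3)); ((0,6),(0,0));
      ((4,5),(4,2)); ((4,0),(4,1)); ((1,0),(3,0)); ((3,3),(3,5))].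

Lemma covering_pairing_small n :
  4 <= n <= 7 -> exists p : cell n -> cell n, covering_pairing p.
Proof.
case/andP=> le4n len7; have : n \in [:: 4; 5; 6; 7] by rewrite !inE; lia.
rewrite !inE => /or4P [] /eqP ->.
- exists (@ord_pairing 3 (pair_lookup pairing_table4)).
  by apply: covering_pairing_of_nat; vm_compute.
- exists (@ord_pairing 4 (pair_lookup pairing_table5)).
  by apply: covering_pairing_of_nat; vm_compute.
- exists (@ord_pairing 5 (pair_lookup pairing_table6)).
  by apply: covering_pairing_of_nat; vm_compute.
- exists (@ord_pairing 6 (pair_lookup pairing_table7)).
  by apply: covering_pairing_of_nat; vm_compute.
Qed.

Lemma covering_pairing_exists n : 4 <= n -> exists p : cell n -> cell n, covering_pairing p.
Proof.
elim/ltn_ind: n => n IH le4n; have [le_n7|lt7n] := leqP n 7.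
  by apply: covering_pairing_small; rewrite le4n.
have [pa pa_cover] : exists p : cell (n - 4) -> cell (n - 4), covering_pairing p.
  by apply: IH; lia.
have [pb pb_cover] : exists p : cell 4 -> cell 4, covering_pairing p.
  exact: covering_pairing_small.
rewrite (_ : n = n - 4 + 4); last by lia.
by exists (block_pairing pa pb); apply: covering_pairing_block.
Qed.

Theorem mainTheorem3 (n : nat) : 4 <= n ->
  maker_wins (@set0 (cell n)) set0 /\
  (forall i : 'I_n, nat_of_ord i = 0 ->
     maker_wins_after [set (i, i)] (@set0 (cell n))).
Proof.
move=> le4n; have [p p_cover] := covering_pairing_exists le4n.
have first_move i : maker_wins_after [set (i, i)] (@set0 (cell n)).
  by apply: (pairing_strategy_wins p_cover) => d; rewrite inE.
split=> [|i _]; last exact: first_move.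
have i0 : 'I_n by exists 0; lia.
apply: (@MakerWins _ _ _ (i0, i0)); first by rewrite !inE.
by rewrite setU0; apply: first_move.
Qed.
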